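(* Let $T$ be a tree of order $n\ge 3$. Then $\chi'_{qm\Sigma}(T)=2$ if $T$ has no two adjacent vertices of equal even degree, and $\chi'_{qm\Sigma}(T)=3$ otherwise.
   Context: A $k$-edge-coloring of $G$ is any map $c:E(G)\to\{1,\dots,k\}$ (adjacent edges may share colors). It induces $\sigma_c(v)=\sum_{u\in N(v)}c(vu)$. The coloring is neighbor sum distinguishing (NSD) if $\sigma_c(u)\ne\sigma_c(v)$ for every edge $uv$. It is quasi-majority if every vertex $v$ is incident to at most $\lceil d(v)/2\rceil$ edges of each single color. $\chi'_{qm\Sigma}(G)$ denotes the least $k$ such that $G$ has a $k$-edge-coloring that is both quasi-majority and NSD. *)

From mathcomp Require Import all_boot.
Set Implicit Arguments. Unset Strict Implicit. Unset Printing Implicit Defensive.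

Definition simple_graph (V : finType) (e : rel V) : Prop :=
  symmetric e /\ irreflexive e.

Definition connected_graph (V : finType) (e : rel V) : Prop :=
  forall u v : V, connect e u v.

Definition acyclic (V : finType) (e : rel V) : Prop :=
  forall (x : V) (p : seq V),
    2 <= size p -> uniq (x :: p) -> path e x p -> e (last x p) x -> False.

Definition is_tree (V : finType) (e : rel V) : Prop :=
  simple_graph e /\ connected_graph e /\ acyclic e.

Definition deg (V : finType) (e : rel V) (v : V) : nat := #|[set u | e v u]|.

(* A k-edge-coloring: c v u is the color of edge vu; it must be symmetric on
   edges and take values in {1,...,k} on edges (values on non-edges are irrelevant). *)
Definition edge_coloring (V : finType) (e : rel V) (k : nat) (c : V -> V -> nat) : Prop :=
  forall u v, e u v -> c u v = c v u /\ 1 <= c u v <= k.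

Definition sigma (V : finType) (e : rel V) (c : V -> V -> nat) (v : V) : nat :=
  \sum_(u | e v u) c v u.

Definition nsd (V : finType) (e : rel V) (c : V -> V -> nat) : Prop :=
  forall u v, e u v -> sigma e c u <> sigma e c v.

(* quasi-majority: at most ceil(d(v)/2) = (d(v)+1)/2 incident edges of each color *)
Definition quasi_majority (V : finType) (e : rel V) (c : V -> V -> nat) : Prop :=
  forall (v : V) (i : nat), #|[set u | e v u & c v u == i]| <= (deg e v).+1 %/ 2.

Definition has_qm_nsd_coloring (V : finType) (e : rel V) (k : nat) : Prop :=
  exists c : V -> V -> nat, [/\ edge_coloring e k c, quasi_majority e c & nsd e c].

Definition chi_qm_sigma_eq (V : finType) (e : rel V) (k : nat) : Prop :=
  has_qm_nsd_coloring e k /\ forall j, j < k -> ~ has_qm_nsd_coloring e j.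

From mathcomp Require Import all_boot zify.
Set Implicit Arguments. Unset Strict Implicit. Unset Printing Implicit Defensive.

(* Root the tree at a vertex r of degree at least 2 and color it top-down:
   once the color a of the edge from v to its parent and the color sum s at
   the parent are known, v colors the edges to its children so that
   quasi-majority holds at v and the color sum at v differs from s.
   With the colors 1 and 2, quasi-majority forces the sum 3d/2 at a vertex of
   even degree d and a sum not divisible by 3 at a vertex of odd degree; at a
   vertex of odd degree the number of 2s can be shifted by one to dodge s.  So
   two colors suffice unless some edge joins two vertices of the same even
   degree, and such an edge defeats every 2-coloring.  With three colors a
   non-root vertex has two colors other than a at hand, and moving one edge
   from the smaller to the larger one always dodges s.  One color violates
   quasi-majority at r. *)

Lemma card_color_class (V : finType) (e : rel V) (c : V -> V -> nat) u i :
  #|[set w | e u w & c u w == i]| = \sum_(w | e u w) (c u w == i).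
Proof.
rewrite -sum1_card big_mkcond [RHS]big_mkcond; apply: eq_bigr => w _.
by rewrite inE; case: (e u w) (c u w == i) => [] [].
Qed.

Lemma deg_sum (V : finType) (e : rel V) u : deg e u = \sum_(w | e u w) 1.
Proof. by rewrite /deg -sum1_card; apply: eq_bigl => w; rewrite inE. Qed.

Section TwoColors.
Variables (V : finType) (e : rel V) (c : V -> V -> nat).
Hypotheses (ec : edge_coloring e 2 c) (qm : quasi_majority e c).

Lemma qm2_class_sizes u : exists n1 n2,
  [/\ deg e u = n1 + n2, sigma e c u = n1 + 2 * n2,
      n1 <= (deg e u).+1 %/ 2 & n2 <= (deg e u).+1 %/ 2].
Proof.
exists #|[set w | e u w & c u w == 1]|, #|[set w | e u w & c u w == 2]|.
rewrite !qm !card_color_class deg_sum /sigma big_distrr -!big_split; split => //;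
  by apply: eq_bigr => w /ec [_]; case: (c u w) => [|[|[|]]].
Qed.

Lemma qm2_sigma_even u : ~~ odd (deg e u) -> sigma e c u = 3 * (deg e u %/ 2).
Proof. by have [n1 [n2 [-> -> ? ?]]] := qm2_class_sizes u; lia. Qed.

Lemma qm2_sigma_odd u : odd (deg e u) -> ~~ (3 %| sigma e c u).
Proof. by have [n1 [n2 [-> -> ? ?]]] := qm2_class_sizes u; lia. Qed.

End TwoColors.

Lemma no_qm_nsd_coloring_lt2 (V : finType) (e : rel V) r j :
  1 < deg e r -> j < 2 -> ~ has_qm_nsd_coloring e j.
Proof.
move=> deg_r j_lt2 [c [ec qm _]].
have /card_gt0P[w] : 0 < deg e r by apply: ltnW.
rewrite inE => erw; have [_ /andP[c_gt0 c_le]] := ec r w erw.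
case: j j_lt2 ec qm c_le => [|[|//]] _ ec qm c_le; first by case: (c r w) c_gt0 c_le.
have := qm r 1; rewrite card_color_class (eq_bigr (fun=> 1)) -?deg_sum; first lia.
by move=> u /ec [_]; case: (c r u) => [|[|]].
Qed.

Lemma no_qm_nsd_coloring2 (V : finType) (e : rel V) u v :
  e u v -> deg e u = deg e v -> ~~ odd (deg e u) -> ~ has_qm_nsd_coloring e 2.
Proof.
move=> euv deg_uv even_u [c [ec qm ns]]; apply: (ns u v euv).
by rewrite !qm2_sigma_even // -deg_uv.
Qed.

Lemma color_lt_sigma (V : finType) (e : rel V) k c u v :
  edge_coloring e k c -> e u v -> 1 < deg e u -> c u v < sigma e c u.
Proof.
move=> ec euv; rewrite /deg (cardsD1 v) inE euv => /card_gt0P[w].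
rewrite !inE => /andP[w_ne euw]; rewrite /sigma (bigD1 v) // (bigD1 w) /=; last first.
  by rewrite euw w_ne.
by have [_ /andP[? _]] := ec u w euw; lia.
Qed.

Lemma connected_has_deg2_vertex (V : finType) (e : rel V) :
  simple_graph e -> connected_graph e -> 3 <= #|V| -> exists r, 1 < deg e r.
Proof.
move=> [sym _] conn cardV; have /card_gt0P[a _] : 0 < #|V| by lia.
apply/existsP/contraT => /existsPn deg_le1.
have nbr_uniq x y z : e x y -> e x z -> y = z.
  move=> exy exz; apply/eqP; apply: contraNT (deg_le1 x) => y_ne_z.
  apply: leq_trans (subset_leq_card (_ : [set y; z] \subset _)).
    by rewrite cards2 y_ne_z.
  by apply/subsetP => w; rewrite !inE => /orP[]/eqP->.
have ball_closed : closed e (a |: [set w | e a w]).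
  apply: (intro_closed (sym_connect_sym sym)) => x y exy; rewrite !inE => /orP[/eqP<-|eax].
    by rewrite exy orbT.
  by rewrite (nbr_uniq x y a exy) ?eqxx // sym.
have : #|V| <= #|a |: [set w | e a w]|.
  rewrite -cardsT subset_leq_card //; apply/subsetP => w _.
  by rewrite -(closed_connect ball_closed (conn a w)) !inE eqxx.
by rewrite cardsU1 -/(deg e a); have := deg_le1 a; case: (a \notin _); lia.
Qed.

Section BreadthFirstLayers.
Variables (V : finType) (e : rel V) (r : V).

Fixpoint layer n : {set V} :=
  if n is n'.+1 then layer n' :|: [set y | [exists x in layer n', e x y]] else [set r].

Lemma layer_step n x y : x \in layer n -> e x y -> y \in layer n.+1.
Proof. by move=> x_n exy; rewrite /= !inE; apply/orP; right; apply/existsP; exists x; rewrite x_n. Qed.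

Lemma layer_path n x q : x \in layer n -> path e x q -> last x q \in layer (n + size q).
Proof.
elim: q n x => [|y q IH] n x /=; first by rewrite addn0.
by move=> x_n /andP[/(layer_step x_n) y_n]; rewrite addnS -addSn; apply: IH.
Qed.

Hypothesis conn : connected_graph e.

Lemma in_some_layer v : exists n, v \in layer n.
Proof.
have /connectP[q q_path ->] := conn r v.
by exists (0 + size q); apply: layer_path q_path; rewrite inE.
Qed.

Definition depth v := ex_minn (in_some_layer v).

Lemma depth_layer v : v \in layer (depth v).
Proof. by rewrite /depth; case: ex_minnP. Qed.

Lemma depth_min v n : v \in layer n -> depth v <= n.
Proof. by rewrite /depth; case: ex_minnP => m _ m_min /m_min. Qed.

Lemma depth_parent v : v != r -> exists2 x, e x v & depth v = (depth x).+1.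
Proof.
move=> v_ne; have := depth_layer v; case def_d: (depth v) => [|n].
  by rewrite inE (negbTE v_ne).
rewrite /= !inE => /orP[v_n|/existsP[x /andP[x_n exv]]].
  by have := depth_min v_n; rewrite def_d ltnn.
exists x => //; have := depth_min x_n; have := depth_min (layer_step (depth_layer x) exv).
by rewrite def_d; lia.
Qed.

Lemma exists_rooting : exists (p : V -> V) (dep : V -> nat),
  [/\ dep r = 0, forall v, v != r -> e (p v) v & forall v, v != r -> dep v = (dep (p v)).+1].
Proof.
have /fin_all_exists[p pP] : forall v, exists x, v != r -> e x v /\ depth v = (depth x).+1.
  move=> v; case: (eqVneq v r) => [_|/depth_parent[x exv ->]]; first by exists r.
  by exists x.
exists p, depth; split=> [|v /pP[] //|v /pP[] //].
by apply/eqP; rewrite -leqn0; apply: depth_min; rewrite inE.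
Qed.

End BreadthFirstLayers.

Definition is_parent (V : eqType) (r : V) (p : V -> V) (u w : V) : bool :=
  (w != r) && (p w == u).

Section RootedAcyclicGraph.
Variables (V : finType) (e : rel V) (r : V) (p : V -> V) (dep : V -> nat).
Hypotheses (sym : symmetric e) (irr : irreflexive e) (acyc : acyclic e).
Hypothesis depth_root : dep r = 0.
Hypothesis parent_edge : forall v, v != r -> e (p v) v.
Hypothesis depth_parent : forall v, v != r -> dep v = (dep (p v)).+1.

Local Notation parent := (is_parent r p).

Lemma root_depth v : (v == r) = (dep v == 0).
Proof. by case: (eqVneq v r) => [->|v_ne]; rewrite ?depth_root // depth_parent. Qed.

Lemma depth_iter x k : k <= dep x -> dep (iter k p x) = dep x - k.
Proof.
elim: k => [|k IH] k_le; first by rewrite subn0.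
have y_ne : iter k p x != r by rewrite root_depth IH; lia.
by rewrite iterS; have := depth_parent y_ne; rewrite IH; lia.
Qed.

Lemma iter_ne_root x k : k < dep x -> iter k p x != r.
Proof. by move=> k_lt; rewrite root_depth depth_iter; lia. Qed.

Lemma iter_depth_root x : iter (dep x) p x = r.
Proof. by apply/eqP; rewrite root_depth depth_iter // subnn. Qed.

Lemma uniq_ancestors x n : n <= (dep x).+1 -> uniq (traject p x n).
Proof.
elim: n => // n IH n_le; rewrite trajectSr rcons_uniq IH ?andbT; last lia.
by apply/trajectP => -[i i_lt /(congr1 dep)]; rewrite !depth_iter; lia.
Qed.

Lemma path_ancestors y x n : n <= dep x -> (0 < n -> e y x) -> path e y (traject p x n).
Proof.
elim: n x y => [|n IH] x y //= n_le eyx; rewrite eyx //=.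
have x_ne : x != r by rewrite root_depth; lia.
apply: IH => [|_]; last by rewrite sym parent_edge.
by have := depth_parent x_ne; lia.
Qed.

Lemma path_rev_ancestors x n : n <= dep x -> path e (iter n p x) (rev (traject p x n)).
Proof.
elim: n => // n IH n_le; rewrite trajectSr rev_rcons /= IH ?andbT; last lia.
exact/parent_edge/iter_ne_root.
Qed.

Lemma last_rev_ancestors x n : last (iter n p x) (rev (traject p x n)) = x.
Proof. by case: n => //= n; rewrite rev_cons last_rcons. Qed.

(* The two chains of ancestors of the ends of an edge that is not a parent
   edge would close a cycle at their first common vertex. *)
Lemma edge_is_parent u v : e u v -> parent u v || parent v u.
Proof.
move=> euv; apply: contraT; rewrite negb_or => /andP[not_uv not_vu].
pose meets j := [exists i : 'I_(dep u).+1, iter i p u == iter j p v].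
have meets_top : meets (dep v) by apply/existsP; exists ord_max; rewrite /= !iter_depth_root.
case: (ex_minnP (ex_intro meets _ meets_top)) => j /existsP[[i /= i_lt] /eqP meet] j_min.
have j_le : j <= dep v := j_min _ meets_top.
have long : 1 < i + j.
  move: meet not_uv not_vu; case: i i_lt => [|[|i]] i_lt; case: j j_le {j_min} => [|[|j]] j_le //=.
  - by move=> meet; rewrite meet irr in euv.
  - by rewrite /is_parent => -> /negP[]; rewrite eqxx andbT root_depth; lia.
  - by rewrite /is_parent => <- _ /negP[]; rewrite eqxx andbT root_depth; lia.
exfalso; apply: (acyc (x := iter j p v) (p := rev (traject p u i) ++ traject p v j)).
- by rewrite size_cat size_rev !size_traject.
- rewrite cons_uniq mem_cat mem_rev negb_or cat_uniq rev_uniq !uniq_ancestors //=; try lia.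
  rewrite andbT -andbA; apply/and3P; split.
  + by apply/trajectP => -[k k_lt]; rewrite -meet => /(congr1 dep); rewrite !depth_iter; lia.
  + by apply/trajectP => -[k k_lt /(congr1 dep)]; rewrite !depth_iter; lia.
  + apply/hasPn => _ /trajectP[k k_lt ->]; rewrite mem_rev; apply/trajectP => -[k' k'_lt meet'].
    have k'_ord : k' < (dep u).+1 by lia.
    have : j <= k by apply: j_min; apply/existsP; exists (Ordinal k'_ord); rewrite meet'.
    lia.
- rewrite cat_path -meet path_rev_ancestors // last_rev_ancestors.
  exact: path_ancestors.
- rewrite last_cat -{1}meet last_rev_ancestors.
  case: j j_le {j_min meet long} => //= j j_le.
  by rewrite last_traject sym parent_edge // iter_ne_root.
Qed.

Lemma edge_parentE u w : e u w = parent u w || parent w u.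
Proof.
apply/idP/orP => [/edge_is_parent/orP//|[] /andP[w_ne /eqP <-]]; first exact: parent_edge.
by rewrite sym parent_edge.
Qed.

End RootedAcyclicGraph.

(* [H d a s] lists the colors of the edges from a vertex of degree [d] to its
   children, given the color [a] of its parent edge ([0] at the root) and the
   color sum [s] at its parent. *)
Definition coloring_rule (k : nat) (H : nat -> nat -> nat -> seq nat) : Prop :=
  forall d a s, 0 < d -> a <= k ->
  [/\ size (H d a s) = d - (a != 0), all (fun x => 0 < x <= k) (H d a s)
    & forall i, ((a != 0) && (a == i)) + count_mem i (H d a s) <= d.+1 %/ 2].

Definition child_by_rule (V : finType) (e : rel V) (H : nat -> nat -> nat -> seq nat)
    (c : V -> V -> nat) (u v : V) : Prop :=
  c u v < sigma e c u /\ sigma e c v = c u v + sumn (H (deg e v) (c u v) (sigma e c u)).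

Section TopDownColoring.
Variables (V : finType) (e : rel V) (r : V) (p : V -> V) (dep : V -> nat).
Variables (k : nat) (H : nat -> nat -> nat -> seq nat).
Local Notation parent := (is_parent r p).

Hypothesis edgeE : forall u w, e u w = parent u w || parent w u.
Hypothesis depth_parent : forall v, v != r -> dep v = (dep (p v)).+1.
Hypothesis deg_root : 1 < deg e r.
Hypothesis rule : coloring_rule k H.

Lemma parent_asym u w : parent u w -> ~~ parent w u.
Proof.
move=> /andP[w_ne /eqP <-]; apply/negP => /andP[pw_ne /eqP ppw].
by have := depth_parent w_ne; have := depth_parent pw_ne; rewrite ppw; lia.
Qed.

Definition children u := [seq w <- enum V | parent u w].
Definition child_index w := index w (children (p w)).

(* [entry_at n v]: the color of the edge from [v] to its parent and the color
   sum at that parent, computed with fuel [n]. *)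
Fixpoint entry_at n v : nat * nat :=
  if n is n'.+1 then
    if v == r then (0, 0) else
    let: (a, s) := entry_at n' (p v) in
    let cs := H (deg e (p v)) a s in
    (nth 0 cs (child_index v), a + sumn cs)
  else (0, 0).

Definition entry v := entry_at (dep v) v.
Definition child_colors u := H (deg e u) (entry u).1 (entry u).2.
Definition color u w := if parent u w then (entry w).1 else (entry u).1.

Lemma entry_root : entry r = (0, 0).
Proof. by rewrite /entry; case: (dep r) => //= n; rewrite eqxx. Qed.

Lemma entryE v : v != r -> entry v =
  (nth 0 (child_colors (p v)) (child_index v), (entry (p v)).1 + sumn (child_colors (p v))).
Proof.
move=> v_ne; rewrite /child_colors {1}/entry depth_parent //= (negbTE v_ne).
by rewrite /entry; case: entry_at.
Qed.

Lemma sum_neighbors (G : V -> nat) u :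
  \sum_(w | e u w) G w = (u != r) * G (p u) + \sum_(w <- children u) G w.
Proof.
rewrite [LHS](eq_bigl (fun w => w \in [predU parent^~ u & parent u])); last first.
  by move=> w; rewrite !inE edgeE orbC.
rewrite bigU /=; last by apply/pred0P => w /=; apply/negP => /andP[/parent_asym/negP].
congr (_ + _); last by rewrite /children big_filter big_enum_cond.
case: (eqVneq u r) => [->|u_ne] /=.
  by apply: big_pred0 => w; rewrite unfold_in /is_parent eqxx.
by rewrite mul1n; apply: (big_pred1 (p u)) => w; rewrite unfold_in /is_parent u_ne eq_sym.
Qed.

Lemma deg_children u : deg e u = (u != r) + size (children u).
Proof. by rewrite deg_sum sum_neighbors muln1 sum1_size. Qed.

Lemma deg_gt0 u : 0 < deg e u.
Proof. by case: (eqVneq u r) => [->|u_ne]; rewrite ?(ltnW deg_root) // deg_children u_ne. Qed.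

Lemma child_index_lt v : v != r -> child_index v < size (children (p v)).
Proof. by move=> v_ne; rewrite /child_index index_mem mem_filter mem_enum /is_parent v_ne eqxx. Qed.

Lemma entry_color u : (entry u).1 <= k /\ ((entry u).1 != 0) = (u != r).
Proof.
have [n] := ubnP (dep u); elim: n u => // n IH u.
case: (eqVneq u r) => [->|u_ne]; first by rewrite entry_root.
rewrite ltnS depth_parent // => /IH[a_le a_ne0].
have [size_cs all_cs _] := rule (entry (p u)).2 (deg_gt0 (p u)) a_le.
have idx_lt : child_index u < size (child_colors (p u)).
  by rewrite /child_colors size_cs a_ne0 deg_children addKn child_index_lt.
by rewrite entryE //=; have /andP[/lt0n_neq0 -> ->] := allP all_cs _ (mem_nth 0 idx_lt).
Qed.

Lemma color_to_parent u : u != r -> color u (p u) = (entry u).1.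
Proof. by move=> u_ne; rewrite /color ifN //; apply: parent_asym; rewrite /is_parent u_ne eqxx. Qed.

Lemma color_to_child u w : parent u w -> color u w = nth 0 (child_colors u) (index w (children u)).
Proof. by rewrite /color => uw; rewrite uw; case/andP: uw => w_ne /eqP pw; rewrite entryE // /child_index pw. Qed.

Lemma size_child_colors u : size (child_colors u) = size (children u).
Proof.
have [a_le a_ne0] := entry_color u; have [-> _ _] := rule (entry u).2 (deg_gt0 u) a_le.
by rewrite a_ne0 deg_children addKn.
Qed.

Lemma sum_colors_around (g : nat -> nat) u :
  \sum_(w | e u w) g (color u w) = (u != r) * g (entry u).1 + \sum_(x <- child_colors u) g x.
Proof.
rewrite sum_neighbors; congr (_ + _).
  by case: (eqVneq u r) => //= u_ne; rewrite color_to_parent.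
rewrite (eq_big_seq (fun w => g (nth 0 (child_colors u) (index w (children u))))); last first.
  by move=> w; rewrite mem_filter => /andP[/color_to_child ->].
rewrite (big_nth u) [RHS](big_nth 0) size_child_colors; apply: eq_big_nat => i /andP[_ i_lt].
by rewrite index_uniq // filter_uniq // enum_uniq.
Qed.

Lemma sigma_color u : sigma e color u = (entry u).1 + sumn (child_colors u).
Proof.
rewrite /sigma (sum_colors_around id) sumnE; congr (_ + _).
by case: (eqVneq u r) => [->|_]; rewrite ?entry_root ?mul1n.
Qed.

Lemma color_qm : quasi_majority e color.
Proof.
move=> u i; rewrite card_color_class (sum_colors_around (fun x => (x == i) : nat)).
have [a_le a_ne0] := entry_color u; have [_ _ /(_ i)] := rule (entry u).2 (deg_gt0 u) a_le.
by rewrite -sum1_count big_mkcond a_ne0; case: (u != r); rewrite ?mul1n.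
Qed.

Lemma color_edge_coloring : edge_coloring e k color.
Proof.
have entry_range v : v != r -> 0 < (entry v).1 <= k.
  by have [-> a_ne0] := entry_color v; rewrite lt0n a_ne0 andbT.
move=> u w; rewrite edgeE => /orP[] uw; rewrite /color uw (negbTE (parent_asym uw)).
  by case/andP: uw => /entry_range.
by case/andP: uw => /entry_range.
Qed.

Lemma deg_parent v : v != r -> 1 < deg e (p v).
Proof.
move=> v_ne; case: (eqVneq (p v) r) => [->//|pv_ne].
rewrite deg_children pv_ne; have := child_index_lt v_ne; lia.
Qed.

Lemma top_down_coloring : exists c,
  [/\ edge_coloring e k c, quasi_majority e c & forall v, v != r -> child_by_rule e H c (p v) v].
Proof.
exists color; split; [exact: color_edge_coloring | exact: color_qm |].
move=> v v_ne.
have col_pv : color (p v) v = (entry v).1 by rewrite /color /is_parent v_ne eqxx.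
have sigma_pv : sigma e color (p v) = (entry v).2 by rewrite sigma_color (entryE v_ne).
have e_pv : e (p v) v by rewrite edgeE /is_parent v_ne eqxx.
split; first exact: color_lt_sigma color_edge_coloring e_pv (deg_parent v_ne).
by rewrite sigma_color col_pv sigma_pv.
Qed.

End TopDownColoring.

Lemma tree_rule_coloring (V : finType) (e : rel V) k H :
  is_tree e -> 3 <= #|V| -> coloring_rule k H ->
  exists c, [/\ edge_coloring e k c, quasi_majority e c &
    forall u v, e u v -> child_by_rule e H c u v \/ child_by_rule e H c v u].
Proof.
move=> [[sym irr] [conn acyc]] cardV rule.
have [r deg_r] := connected_has_deg2_vertex (conj sym irr) conn cardV.
have [p [dep [dep_r parent_edge depth_parent]]] := exists_rooting r conn.
have edgeE := edge_parentE sym irr acyc dep_r parent_edge depth_parent.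
have [c [ec qm by_rule]] := top_down_coloring edgeE depth_parent deg_r rule.
exists c; split => // u v; rewrite edgeE => /orP[]/andP[ch_ne /eqP <-]; [left|right].
all: exact: by_rule.
Qed.

Lemma nsd_of_child_rule (V : finType) (e : rel V) H c :
  symmetric e ->
  (forall u v, e u v -> child_by_rule e H c u v \/ child_by_rule e H c v u) ->
  (forall u v, e u v -> child_by_rule e H c u v -> sigma e c u <> sigma e c v) ->
  nsd e c.
Proof.
move=> sym by_rule child_neq u v euv; have evu : e v u by rewrite sym.
by case: (by_rule u v euv) => [/(child_neq _ _ euv)|/(child_neq _ _ evu)/nesym].
Qed.

(* [m] is the largest number of 2s quasi-majority allows among the children;
   at odd degree [m - 1] 2s are allowed as well and give a different sum. *)
Definition rule2 (d a s : nat) : seq nat :=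
  let n := d - (a != 0) in
  let m := d.+1 %/ 2 - (a == 2) in
  let t := if odd d && (a + n + m == s) then m.-1 else m in
  nseq (minn t n) 2 ++ nseq (n - t) 1.

(* [x < y] are the colors other than [a]; moving one child edge from [x] to
   [y] changes the sum, so one of the two choices of [t] avoids [s]. *)
Definition rule3 (d a s : nat) : seq nat :=
  let n := d - (a != 0) in
  let h := d.+1 %/ 2 in
  let x := if a == 1 then 2 else 1 in
  let y := if a == 3 then 2 else 3 in
  let t := if (a != 0) && (a + x * h + y * (n - h) == s) then h.-1 else h in
  nseq (minn t n) x ++ nseq (n - t) y.

Lemma rule2_valid : coloring_rule 2 rule2.
Proof.
move=> d a s d_gt0; case: a => [|[|[|//]]] _; split; rewrite /rule2 /=;
  rewrite ?all_cat ?all_nseq ?size_cat ?size_nseq //= ?orbT //;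
  try move=> i; rewrite ?count_cat ?count_nseq /=;
  try case: i => [|[|[|i]]]; repeat case: ifP => /= ?; lia.
Qed.

Lemma rule3_valid : coloring_rule 3 rule3.
Proof.
move=> d a s d_gt0; case: a => [|[|[|[|//]]]] _; split; rewrite /rule3 /=;
  rewrite ?all_cat ?all_nseq ?size_cat ?size_nseq //= ?orbT //;
  try move=> i; rewrite ?count_cat ?count_nseq /=;
  try case: i => [|[|[|[|i]]]]; repeat case: ifP => /= ?; lia.
Qed.

Lemma rule2_sum_neq d a s : 0 < a <= 2 -> a < s ->
  (~~ odd d -> s != 3 * (d %/ 2)) -> a + sumn (rule2 d a s) != s.
Proof.
case: a => [|[|[|//]]] // _ a_lt; rewrite /rule2 sumn_cat !sumn_nseq /=;
  repeat case: ifP => /=; try move/eqP; lia.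
Qed.

Lemma rule3_sum_neq d a s : 0 < a <= 3 -> a < s -> a + sumn (rule3 d a s) != s.
Proof.
case: a => [|[|[|[|//]]]] // _ a_lt; rewrite /rule3 sumn_cat !sumn_nseq /=;
  repeat case: ifP => /=; try move/eqP; lia.
Qed.

Lemma rule2_child_sigma_neq (V : finType) (e : rel V) c u v :
  edge_coloring e 2 c -> quasi_majority e c -> e u v ->
  ~ (deg e u = deg e v /\ ~~ odd (deg e u)) ->
  child_by_rule e rule2 c u v -> sigma e c u <> sigma e c v.
Proof.
move=> ec qm euv not_bad [a_lt ->]; apply/eqP; rewrite eq_sym.
have [_ a_range] := ec u v euv; apply: rule2_sum_neq => // even_v; apply/eqP => sigma_u.
have even_u : ~~ odd (deg e u).
  by apply/negP => /(qm2_sigma_odd ec qm)/negP; apply; rewrite sigma_u dvdn_mulr.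
by apply: not_bad; split => //; have := qm2_sigma_even ec qm even_u; rewrite sigma_u; lia.
Qed.

Lemma rule3_child_sigma_neq (V : finType) (e : rel V) c u v :
  edge_coloring e 3 c -> e u v -> child_by_rule e rule3 c u v -> sigma e c u <> sigma e c v.
Proof.
move=> ec euv [a_lt ->]; apply/eqP; rewrite eq_sym.
by have [_ a_range] := ec u v euv; apply: rule3_sum_neq.
Qed.

Theorem mainTheorem6 (V : finType) (e : rel V) :
  is_tree e -> 3 <= #|V| ->
  ((~ exists u v : V, [/\ e u v, deg e u = deg e v & ~~ odd (deg e u)]) ->
     chi_qm_sigma_eq e 2) /\
  ((exists u v : V, [/\ e u v, deg e u = deg e v & ~~ odd (deg e u)]) ->
     chi_qm_sigma_eq e 3).
Proof.
move=> tree cardV; have [[sym irr] [conn _]] := tree.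
have [r deg_r] := connected_has_deg2_vertex (conj sym irr) conn cardV.
have lt2 j : j < 2 -> ~ has_qm_nsd_coloring e j by apply: no_qm_nsd_coloring_lt2 deg_r.
split=> [no_bad | [u [v [euv deg_uv even_u]]]].
  split; last by move=> j /lt2.
  have [c [ec qm by_rule]] := tree_rule_coloring tree cardV rule2_valid.
  exists c; split => //; apply: nsd_of_child_rule sym by_rule _ => x y exy.
  by apply: rule2_child_sigma_neq => // -[deg_xy even_x]; apply: no_bad; exists x, y.
split; last first.
  move=> j; rewrite ltnS leq_eqVlt => /predU1P[->|/lt2//].
  exact: no_qm_nsd_coloring2 euv deg_uv even_u.
have [c [ec qm by_rule]] := tree_rule_coloring tree cardV rule3_valid.
exists c; split => //; apply: nsd_of_child_rule sym by_rule _ => x y exy.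
exact: rule3_child_sigma_neq.
Qed.
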